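(* Let $w,w'\in[0,1]$ with $w+w'=1$. For every interval $\textbf{A}=[\underline{a},\overline{a}]\in I(\mathbb{R})$, $(w\underline{a}+w'\overline{a})\odot[\underline{a},\overline{a}]\nprec\textbf{0}$.
   Context: $I(\mathbb{R})$ is the set of closed bounded intervals; for $\lambda\in\mathbb{R}$, $\lambda\odot[\underline{a},\overline{a}]=[\lambda\underline{a},\lambda\overline{a}]$ if $\lambda\ge0$ and $[\lambda\overline{a},\lambda\underline{a}]$ if $\lambda<0$; $\textbf{0}=[0,0]$. $\textbf{A}\prec\textbf{B}$ iff $\underline{a}\le\underline{b}$, $\overline{a}\le\overline{b}$ and $\textbf{A}\ne\textbf{B}$; $\nprec$ is its negation. *)

From Stdlib Require Export Reals.
Open Scope R_scope.

(* A closed bounded interval [lo, hi] is represented by the pair (lo, hi);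
   membership in I(R) is the side condition lo <= hi (see is_interval). *)
Definition interval : Type := (R * R)%type.

Definition is_interval (A : interval) : Prop := fst A <= snd A.

Definition iscal (l : R) (A : interval) : interval :=
  if Rle_dec 0 l then (l * fst A, l * snd A) else (l * snd A, l * fst A).

Definition izero : interval := (0, 0).

Definition iprec (A B : interval) : Prop :=
  fst A <= fst B /\ snd A <= snd B /\ A <> B.

(* If [l] lies in [[lo, hi]], the upper end of [l ⊙ [lo, hi]] is [l * hi] (for
   [l >= 0]) or [l * lo] (for [l < 0]), and in both cases it is at least [l ^ 2].
   So [l ⊙ [lo, hi] ≺ 0] forces [l = 0], but [0 ⊙ A] is [0] itself.  A convex
   combination [w lo + w' hi] of the endpoints always lies in the interval. *)

From Stdlib Require Import Lra Psatz.

Lemma convex_comb_mem (w w' lo hi : R) :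
  0 <= w -> 0 <= w' -> w + w' = 1 -> lo <= hi ->
  lo <= w * lo + w' * hi <= hi.
Proof. intros; split; nra. Qed.

Lemma iscal0 (A : interval) : iscal 0 A = izero.
Proof.
  unfold iscal, izero.
  destruct (Rle_dec 0 0) as [_ | H]; [f_equal; ring | lra].
Qed.

Lemma sqr_le_snd_iscal (l lo hi : R) :
  lo <= l <= hi -> l * l <= snd (iscal l (lo, hi)).
Proof.
  intros Hl; unfold iscal.
  destruct (Rle_dec 0 l); simpl; nra.
Qed.

Lemma not_iprec_iscal_izero (l lo hi : R) :
  lo <= l <= hi -> ~ iprec (iscal l (lo, hi)) izero.
Proof.
  intros Hl [_ [Hhi Hneq]].
  pose proof (sqr_le_snd_iscal l lo hi Hl) as Hsq.
  simpl in Hhi.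
  assert (Hl0 : l = 0) by nra.
  apply Hneq; rewrite Hl0; apply iscal0.
Qed.

Theorem lemma5p1 (w w' : R) (hw : 0 <= w <= 1) (hw' : 0 <= w' <= 1)
  (hsum : w + w' = 1) (alo ahi : R) (hA : is_interval (alo, ahi)) :
  ~ iprec (iscal (w * alo + w' * ahi) (alo, ahi)) izero.
Proof.
  apply not_iprec_iscal_izero, convex_comb_mem; tauto.
Qed.
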